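(* Let $p$ and $q$ be odd primes such that $p=\frac{q^k-1}{q-1}$ for some positive integer $k$. Then there exists a transitive imprimitive permutation group of degree $pq$ admitting a system of imprimitivity with blocks of size $q$ whose intersection density equals $q$.
   Context: For a permutation group $G$ on a set $V$, two elements $g,h\in G$ are intersecting if $g(v)=h(v)$ for some $v\in V$; a subset $\mathcal{F}\subseteq G$ is intersecting if every pair of its elements is intersecting. The intersection density of $G$ is $\rho(G)=\max\{|\mathcal{F}|:\mathcal{F}\subseteq G \text{ intersecting}\}/\max_{v\in V}|G_v|$, where $G_v$ is the stabilizer of $v$. *)

From mathcomp Require Import all_boot all_order all_algebra all_fingroup all_solvable.
From mathcomp Require Import perm action.
Set Implicit Arguments. Unset Strict Implicit. Unset Printing Implicit Defensive.

Section IntersectionDensity.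
Variable T : finType.

Definition perm_intersecting (g h : {perm T}) : bool := [exists v, g v == h v].

Definition intersecting_family (F : {set {perm T}}) : bool :=
  [forall g in F, forall h in F, perm_intersecting g h].

Definition max_intersecting (G : {set {perm T}}) : nat :=
  \max_(F : {set {perm T}} | (F \subset G) && intersecting_family F) #|F|.

Definition max_stab (G : {group {perm T}}) : nat :=
  \max_(v : T) #|('C_G[v | 'P])%g|.

Definition intersection_density (G : {group {perm T}}) : rat :=
  ((max_intersecting G)%:R / (max_stab G)%:R)%R.

Definition block_system (G : {group {perm T}}) (P : {set {set T}}) : Prop :=
  partition P [set: T] /\ (forall g B, g \in G -> B \in P -> g @: B \in P).

Definition imprimitive (G : {group {perm T}}) : Prop :=
  exists P : {set {set T}}, block_system G P /\
    (forall B, B \in P -> 1 < #|B| < #|T|).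

End IntersectionDensity.

From mathcomp Require Import all_boot all_order all_algebra all_fingroup all_solvable.
From mathcomp Require Import perm action all_field.
Set Implicit Arguments. Unset Strict Implicit. Unset Printing Implicit Defensive.
Import GRing.Theory Num.Theory.

(* Let A and B be finite abelian groups and
   U a set of "words" u : A -> B which is an additive subgroup, is invariant under
   the shifts of A, is onto B under evaluation at 0, and all of whose words vanish
   somewhere.  The maps sigma j u : (a, b) |-> (a + j, b + u (a + j)), j in A,
   u in U, form a transitive group G on A * B whose columns {a} * B are blocks.
   The stabiliser of a point is {sigma 0 u | u vanishes on its column}, of order
   |U| / |B|; an intersecting family injects into U through its words, and
   {sigma 0 u | u in U} is intersecting since u - v vanishes somewhere.

   The hypotheses are realised with A = Z_p and B = F_q (section CyclicCode):
   in F = GF(q^k) pick a primitive p-th root of unity z (p divides q^k - 1) and an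
   onto F_q-linear form chi with a nonzero h in its kernel (k > 1), and let U be
   the words i |-> chi (z^i v), v in F.  As p is coprime to q - 1, every nonzero
   element of F is a prime-field element times a power of z, so z^c v is an
   integer multiple of h for some c and the word of v vanishes at c. *)

Lemma repunit_prime_facts p q k :
  prime p -> prime q -> 0 < k -> p = (q ^ k - 1) %/ (q - 1) ->
  [/\ (q ^ k).-1 = q.-1 * p, coprime p q.-1 & 1 < k].
Proof.
move=> pr_p pr_q k_gt0 def_p.
have q1_gt0 : 0 < q.-1 by rewrite -ltnS prednK ?prime_gt1 ?prime_gt0.
have def_p_sum : p = \sum_(i < k) q ^ i by rewrite def_p !subn1 predn_exp mulKn.
have k_gt1 : 1 < k.
  case: k k_gt0 def_p_sum {def_p} => [|[|k]] // _.
  by rewrite big_ord1 => p1; rewrite p1 in pr_p.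
have lt_q1_p : q.-1 < p.
  rewrite def_p_sum; case: k k_gt1 {def_p_sum def_p k_gt0} => [|[|k]] // _.
  by rewrite 2!big_ord_recl expn0 expn1 addnA ltn_addr // add1n ltnS leq_pred.
split=> //; first by rewrite predn_exp -def_p_sum.
by rewrite prime_coprime // gtnNdvd.
Qed.

Section PrimeSubfield.
Local Open Scope ring_scope.
Variables (q : nat) (F : finFieldType).
Hypothesis chF : q \in [pchar F].

Lemma natf_eq_mod m n : (m%:R == n%:R :> F) = (m == n %[mod q])%N.
Proof.
wlog le_mn : m n / (m <= n)%N.
  move=> wlog; case: (leqP m n) => [/wlog //|/ltnW le_nm].
  by rewrite eq_sym [RHS]eq_sym wlog.
by rewrite eq_sym [RHS]eq_sym eqn_mod_dvd // (dvdn_pcharf chF) natrB // subr_eq0.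
Qed.

Lemma prime_subfield_roots (w : F) : w ^+ q.-1 = 1 -> exists n, w = n%:R.
Proof.
move=> wq.
have pr_q := pcharf_prime chF.
have q_pred : q.-1.+1 = q := prednK (prime_gt0 pr_q).
have q1_gt0 : (0 < q.-1)%N by rewrite -ltnS q_pred prime_gt1.
pose rs := [seq n%:R : F | n <- iota 1 q.-1].
have rs_roots : all q.-1.-unity_root rs.
  apply/allP => x /mapP [n]; rewrite mem_iota add1n q_pred => /andP [n_gt0 n_lt_q] ->.
  have nz : n%:R != 0 :> F.
    by rewrite -(dvdn_pcharf chF) (gtnNdvd n_gt0 n_lt_q).
  rewrite unity_rootE -(inj_eq (mulIf nz)) mul1r -exprSr q_pred.
  by rewrite -(pFrobenius_autE chF) pFrobenius_aut_nat.
have rs_uniq : uniq rs.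
  rewrite map_inj_in_uniq ?iota_uniq // => m n; rewrite !mem_iota !add1n q_pred.
  by move=> /andP [_ lt_mq] /andP [_ lt_nq] /eqP; rewrite natf_eq_mod !modn_small // => /eqP.
have : w \in rs.
  rewrite -(mem_unity_roots q1_gt0 rs_roots rs_uniq) ?size_map ?size_iota //.
  by rewrite -topredE /= unity_rootE wq.
by case/mapP => n _ ->; exists n.
Qed.

End PrimeSubfield.

(* When |F^*| = (q - 1) p with p coprime to q - 1, F^* is the product of the
   prime subfield's units and the group of p-th roots of unity: x^(q-1) is a
   power z^j, and with a (q - 1) = -1 mod p, x z^(ja) is a (q-1)-th root of 1. *)
Section UnitDecomposition.
Local Open Scope ring_scope.
Variables (p q : nat) (F : finFieldType) (z : F).
Hypotheses (chF : q \in [pchar F]) (z_prim : p.-primitive_root z).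
Hypotheses (cardF : #|F|.-1 = (q.-1 * p)%N) (coprime_pq : coprime p q.-1).

Lemma unit_decomposition x : x != 0 -> exists c n : nat, x * z ^+ c = n%:R.
Proof.
move=> x_nz.
have p_gt0 := prim_order_gt0 z_prim.
have x_order : x ^+ (q.-1 * p) = 1.
  apply: (mulIf x_nz); rewrite mul1r -exprSr -cardF prednK ?expf_card //.
  by apply/card_gt0P; exists 0.
have [j xq] := prim_rootP z_prim (etrans (esym (exprM _ _ _)) x_order).
have [a _ dvd_p] := Bezoutl q.-1 p_gt0; rewrite (eqP coprime_pq) in dvd_p.
exists (j * a)%N; apply: (prime_subfield_roots chF).
rewrite exprMn -exprM mulnC exprM xq -!exprM -exprD; apply/eqP.
rewrite -(prim_order_dvd z_prim).
by rewrite mulnCA -[X in (X + _)%N]muln1 -mulnDr dvdn_mull // mulnC.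
Qed.

End UnitDecomposition.

(* By Cauchy's theorem on the unit group, a finite field has a primitive p-th
   root of unity for every prime p dividing |F| - 1. *)
Lemma exists_prim_root (F : finFieldType) p :
  prime p -> (p %| #|F|.-1)%N -> exists z : F, (p.-primitive_root z)%R.
Proof.
move=> pr_p dvd_p.
have [u _ ord_u] := @Cauchy _ p [set: {unit F}]%G pr_p
  (etrans (congr1 _ (card_finField_unit F)) dvd_p).
have u_pow_p : (FinRing.uval u ^+ p = 1)%R.
  by rewrite -FinRing.val_unitX -ord_u expg_order.
have [m m_prim m_dvd_p] := prim_order_exists (prime_gt0 pr_p) u_pow_p.
exists (FinRing.uval u); have [/eqP m1|/eqP <- //] := orP ((primeP pr_p).2 m m_dvd_p).
have u1 : u = 1%g by apply: val_inj; rewrite /= -[LHS]expr1 -m1 prim_expr_order.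
by move: pr_p; rewrite -ord_u u1 order1.
Qed.

(* A field of order q^k, k > 1, has an onto F_q-linear form with a nonzero
   kernel: the first coordinate in a basis over the prime field, whose
   kernel contains the second basis vector. *)
Section CoordinateForm.
Local Open Scope ring_scope.

Lemma exists_coordinate_form (F : finFieldType) q k (chF : q \in [pchar F]) :
  #|F| = (q ^ k)%N -> (1 < k)%N ->
  exists chi : {additive F -> 'F_q},
    (forall b, exists v, chi v = b) /\ exists2 h, h != 0 & chi h = 0.
Proof.
move=> cardF k_gt1; pose V := pPrimeCharType chF.
pose X := vbasis (fullv : {vspace V}).
have X_free : free X := basis_free (vbasisP fullv).
have dim_gt1 : (1 < \dim (fullv : {vspace V}))%N.
  by rewrite pprimeChar_dimf [#|_|]cardF pfactorK // (pcharf_prime chF).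
pose i0 : 'I_(\dim fullv) := Ordinal (ltnW dim_gt1).
pose i1 : 'I_(\dim fullv) := Ordinal dim_gt1.
exists (coord X i0 : {additive V -> 'F_q}); split.
  move=> b; exists (b *: X`_i0 : V).
  change (coord X i0 (b *: X`_i0) = b).
  by rewrite linearZ /= (coord_free i0 i0 X_free) eqxx mulr1.
exists (X`_i1 : V); last exact: (coord_free i1 i0 X_free).
by apply: (free_not0 X_free); apply: mem_nth; rewrite size_tuple.
Qed.

End CoordinateForm.

Section AffineCodeGroup.
Local Open Scope ring_scope.
Variables (A B : finZmodType) (X : finType).
Hypothesis cardX : #|{: A * B}| = #|X|.
Variable U : {set {ffun A -> B}}.
Hypothesis U_0 : 0 \in U.
Hypothesis U_sub : {in U &, forall u v, u - v \in U}.
Hypothesis U_shift : forall u j, u \in U -> [ffun a => u (a + j)] \in U.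
Hypothesis U_root : forall u, u \in U -> exists a, u a = 0.
Hypothesis U_onto : forall b, exists2 u, u \in U & u 0 = b.

Lemma U_add u v : u \in U -> v \in U -> u + v \in U.
Proof. by move=> uU vU; have := U_sub uU (U_sub U_0 vU); rewrite sub0r opprK. Qed.

Lemma U_onto_at a b : exists u, (u \in U) && (u a == b).
Proof.
have [u uU u0] := U_onto b; exists [ffun c => u (c - a)].
by rewrite U_shift //= ffunE subrr u0 eqxx.
Qed.

Definition point (t : A * B) : X := enum_val (cast_ord cardX (enum_rank t)).
Definition coords (x : X) : A * B := enum_val (cast_ord (esym cardX) (enum_rank x)).

Lemma pointK : cancel point coords.
Proof. by move=> t; rewrite /coords /point enum_valK cast_ordK enum_rankK. Qed.

Lemma coordsK : cancel coords point.
Proof. by move=> x; rewrite /coords /point enum_valK cast_ordKV enum_rankK. Qed.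

Definition affine (j : A) (u : {ffun A -> B}) (t : A * B) : A * B :=
  (t.1 + j, t.2 + u (t.1 + j)).

Lemma affine_inj j u : injective (affine j u).
Proof.
apply: (can_inj (g := fun t => (t.1 - j, t.2 - u t.1))).
by case=> a b; rewrite /affine /= !addrK.
Qed.

Lemma sigma_inj j u : injective (point \o affine j u \o coords).
Proof.
exact: inj_comp (inj_comp (can_inj pointK) (@affine_inj j u)) (can_inj coordsK).
Qed.

Definition sigma j u : {perm X} := perm (@sigma_inj j u).

Lemma coords_sigma j u x : coords (sigma j u x) = affine j u (coords x).
Proof. by rewrite permE /= pointK. Qed.

Lemma sigmaM j u k v :
  (sigma j u * sigma k v)%g = sigma (j + k) ([ffun a => u (a - k)] + v).
Proof.
apply/permP => x; apply: (can_inj coordsK).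
rewrite permM !coords_sigma; case: (coords x) => a b.
by rewrite /affine /= !ffunE /= !addrA addrK.
Qed.

Lemma sigma1 : sigma 0 0 = 1%g.
Proof.
apply/permP => x; apply: (can_inj coordsK).
by rewrite perm1 coords_sigma; case: (coords x) => a b; rewrite /affine ffunE !addr0.
Qed.

Definition word_of (s : {perm X}) : {ffun A -> B} :=
  [ffun a => (coords (s (point (a - (coords (s (point 0))).1, 0)))).2].

Lemma word_of_sigma j u : word_of (sigma j u) = u.
Proof. by apply/ffunP => a; rewrite ffunE !coords_sigma !pointK /= !add0r subrK. Qed.

Definition affine_code_set : {set {perm X}} := [set sigma j u | j in [set: A], u in U].

Lemma mem_affine_code j u : u \in U -> sigma j u \in affine_code_set.
Proof. by move=> uU; apply/imset2P; exists j u. Qed.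

Lemma affine_codeP s :
  s \in affine_code_set -> exists j u, u \in U /\ s = sigma j u.
Proof. by case/imset2P => j u _ uU ->; exists j, u. Qed.

Lemma affine_code_group_set : group_set affine_code_set.
Proof.
apply/group_setP; split; first by rewrite -sigma1 mem_affine_code.
move=> _ _ /affine_codeP [j [u [uU ->]]] /affine_codeP [k [v [vU ->]]].
by rewrite sigmaM mem_affine_code // U_add // U_shift.
Qed.

Canonical affine_code_group := Group affine_code_group_set.
Local Notation G := affine_code_group.

(* G is transitive: the point (a, b) is reached from (0, 0) by sigma a u
   for any word u with u a = b. *)
Lemma affine_code_transitive : [transitive G, on [set: X] | 'P].
Proof.
apply/imsetP; exists (point 0) => //; apply/setP => x; rewrite inE; apply/esym/orbitP.
have [u /andP [uU /eqP ua]] := U_onto_at (coords x).1 (coords x).2.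
exists (sigma (coords x).1 u); first exact: mem_affine_code.
apply: (can_inj coordsK); rewrite /= coords_sigma pointK /affine /= !add0r ua.
by case: (coords x).
Qed.

Definition column (x : X) : {set X} := [set y in [set: X] | (coords x).1 == (coords y).1].
Definition columns : {set {set X}} := preim_partition (fun x => (coords x).1) [set: X].

Lemma card_column x : #|column x| = #|B|.
Proof.
have -> : column x = [set point ((coords x).1, b) | b : B].
  apply/setP => y; rewrite !inE; apply/eqP/imsetP => [-> | [b _ ->]]; last by rewrite pointK.
  by exists (coords y).2; rewrite // -[LHS]coordsK; case: (coords y).
by rewrite card_imset // => b c /(can_inj pointK) [].
Qed.

Lemma sigma_column j u x : sigma j u @: column x = column (sigma j u x).
Proof.
apply/eqP; rewrite eqEcard card_imset; last exact: perm_inj.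
rewrite !card_column leqnn andbT.
apply/subsetP => _ /imsetP [y y_in ->]; move: y_in; rewrite !inE => /eqP col_y.
by rewrite !coords_sigma /= col_y.
Qed.

Lemma columns_block_system :
  block_system G columns /\ forall S, S \in columns -> #|S| = #|B|.
Proof.
split; last by move=> _ /imsetP [x _ ->]; exact: card_column.
split; first exact: preim_partitionP.
move=> _ _ /affine_codeP [j [u [uU ->]]] /imsetP [x _ ->].
by rewrite sigma_column; apply/imsetP; exists (sigma j u x).
Qed.

Definition vanishing (a : A) : {set {ffun A -> B}} := [set u in U | u a == 0].

Lemma card_vanishing a : #|U| = (#|vanishing a| * #|B|)%N.
Proof.
pose w b := xchoose (U_onto_at a b).
have /all_and2 [wU wa] : forall b, w b \in U /\ w b a = b.
  by move=> b; have /andP [? /eqP ?] := xchooseP (U_onto_at a b).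
pose glue (t : {ffun A -> B} * B) := t.1 + w t.2.
have glue_inj : {in setX (vanishing a) [set: B] &, injective glue}.
  move=> [u b] [v c]; rewrite !inE /glue /= => /andP [/andP [_ /eqP ua] _].
  move=> /andP [/andP [_ /eqP va] _] eq_uv.
  have eq_bc : b = c.
    have := congr1 (fun f : {ffun A -> B} => f a) eq_uv.
    by rewrite /= !ffunE ua va !wa !add0r.
  by move: eq_uv; rewrite eq_bc => /addIr ->.
have im_glue : glue @: setX (vanishing a) [set: B] = U.
  apply/setP => u; apply/imsetP/idP => [[[v b]] | uU].
    by rewrite !inE /glue /= => /andP [/andP [vU _] _] ->; rewrite U_add.
  exists (u - w (u a), u a); last by rewrite /glue /= subrK.
  by rewrite !inE /= U_sub // ffunE ffunE wa subrr eqxx.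
by rewrite -{1}im_glue (card_in_imset glue_inj) cardsX cardsT.
Qed.

Lemma sigma0_inj : injective (sigma 0).
Proof. by move=> u v /(congr1 word_of); rewrite !word_of_sigma. Qed.

Lemma stabilizer x : ('C_G[x | 'P])%g = sigma 0 @: vanishing (coords x).1.
Proof.
apply/setP => s; apply/idP/imsetP => [|[u]]; last first.
  rewrite inE => /andP [uU /eqP u0] ->; rewrite inE mem_affine_code //=.
  apply/astab1P; apply: (can_inj coordsK); rewrite /= coords_sigma /affine.
  by rewrite addr0 u0 addr0; case: (coords x).
rewrite inE => /andP [/affine_codeP [j [u [uU ->]]] /astab1P /= fix_x].
have := congr1 coords fix_x; rewrite coords_sigma /affine; case: (coords x) => a b [].
move=> /eqP; rewrite -subr_eq0 addrC addKr => /eqP -> /eqP.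
by rewrite addr0 -subr_eq0 addrC addKr => u0; exists u; rewrite // inE uU.
Qed.

Lemma card_stabilizer x : #|('C_G[x | 'P])%g| = (#|U| %/ #|B|)%N.
Proof.
rewrite stabilizer card_imset; last exact: sigma0_inj.
by rewrite (card_vanishing (coords x).1) mulnK //; apply/card_gt0P; exists 0.
Qed.

Lemma max_stab_affine_code : max_stab G = (#|U| %/ #|B|)%N.
Proof.
apply/eqP; rewrite eqn_leq; apply/andP; split.
  by apply/bigmax_leqP => x _; rewrite card_stabilizer.
by rewrite -(card_stabilizer (point 0)) (leq_bigmax (point 0)).
Qed.

(* Two elements of G with the same word intersect only if they are equal,
   so the word map is injective on an intersecting family. *)
Lemma intersecting_word_inj (F : {set {perm X}}) :
  F \subset G -> intersecting_family F -> {in F &, injective word_of}.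
Proof.
move=> sFG /forall_inP F_int s t sF tF.
have /forall_inP /(_ _ tF) /existsP [x /eqP] := F_int _ sF.
have [j [u [uU ->]]] := affine_codeP (subsetP sFG s sF).
have [k [v [vU ->]]] := affine_codeP (subsetP sFG t tF).
move=> /(congr1 (fun y => (coords y).1)); rewrite /= !coords_sigma /= => /addrI ->.
by rewrite !word_of_sigma => ->.
Qed.

(* The maximum is attained by {sigma 0 u | u in U}: sigma 0 u and sigma 0 v
   agree on every point of the column where u - v vanishes. *)
Lemma max_intersecting_affine_code : max_intersecting G = #|U|.
Proof.
apply/eqP; rewrite eqn_leq; apply/andP; split.
  apply/bigmax_leqP => F /andP [sFG F_int].
  rewrite -(card_in_imset (intersecting_word_inj sFG F_int)); apply/subset_leq_card/subsetP.
  move=> _ /imsetP [s sF ->]; have [j [u [uU ->]]] := affine_codeP (subsetP sFG s sF).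
  by rewrite word_of_sigma.
rewrite -(card_imset _ sigma0_inj); apply: leq_bigmax_cond; apply/andP; split.
  by apply/subsetP => _ /imsetP [u uU ->]; exact: mem_affine_code.
apply/forall_inP => _ /imsetP [u uU ->]; apply/forall_inP => _ /imsetP [v vU ->].
have [a uva] := U_root (U_sub uU vU).
apply/existsP; exists (point (a, 0)); apply/eqP; apply: (can_inj coordsK).
rewrite !coords_sigma pointK /affine /= !addr0 !add0r.
by apply/eqP; rewrite xpair_eqE eqxx /= -subr_eq0 -uva !ffunE.
Qed.

Lemma intersection_density_affine_code : intersection_density G = #|B|%:R.
Proof.
have B_gt0 : (0 < #|B|)%N by apply/card_gt0P; exists 0.
have V_gt0 : (0 < #|vanishing 0%R|)%N.
  by apply/card_gt0P; exists 0; rewrite inE U_0 ffunE eqxx.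
rewrite /intersection_density max_intersecting_affine_code max_stab_affine_code.
rewrite (card_vanishing 0%R) mulnK // natrM mulrAC mulfV ?mul1r //.
by rewrite pnatr_eq0 -lt0n.
Qed.

End AffineCodeGroup.

Section CyclicCode.
Local Open Scope ring_scope.
Variables (p : nat) (F : finFieldType) (B : finZmodType) (z : F) (chi : {additive F -> B}).
Hypotheses (p_gt1 : (1 < p)%N) (z_prim : p.-primitive_root z).

Definition cyclic_word (v : F) : {ffun 'Z_p -> B} := [ffun i : 'Z_p => chi (z ^+ i * v)].
Definition cyclic_code : {set {ffun 'Z_p -> B}} := [set cyclic_word v | v in [set: F]].

Lemma mem_cyclic_code v : cyclic_word v \in cyclic_code.
Proof. exact: imset_f. Qed.

Lemma cyclic_codeP u : u \in cyclic_code -> exists v, u = cyclic_word v.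
Proof. by case/imsetP => v _ ->; exists v. Qed.

Lemma exprZp (i : 'Z_p) (n : nat) : z ^+ (i + inZp n)%R = z ^+ i * z ^+ n.
Proof.
have z_prim' : (Zp_trunc p).+2.-primitive_root z by rewrite Zp_cast.
by rewrite -exprD /= modnDmr (prim_expr_mod z_prim').
Qed.

Lemma cyclic_code0 : 0 \in cyclic_code.
Proof.
have -> : 0 = cyclic_word 0 by apply/ffunP => i; rewrite !ffunE mulr0 raddf0.
exact: mem_cyclic_code.
Qed.

Lemma cyclic_codeB : {in cyclic_code &, forall u v, u - v \in cyclic_code}.
Proof.
move=> _ _ /cyclic_codeP [v ->] /cyclic_codeP [w ->].
have -> : cyclic_word v - cyclic_word w = cyclic_word (v - w).
  by apply/ffunP => i; rewrite !ffunE mulrBr raddfB.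
exact: mem_cyclic_code.
Qed.

(* Shifting a word by j multiplies its defining element by z ^+ j. *)
Lemma cyclic_code_shift u j :
  u \in cyclic_code -> [ffun i => u (i + j)] \in cyclic_code.
Proof.
move=> /cyclic_codeP [v ->].
have -> : [ffun i => cyclic_word v (i + j)] = cyclic_word (z ^+ j * v).
  by apply/ffunP => i; rewrite !ffunE -[j in (i + j)%R]valZpK exprZp mulrA.
exact: mem_cyclic_code.
Qed.

Lemma cyclic_code_onto : (forall b, exists v, chi v = b) ->
  forall b, exists2 u, u \in cyclic_code & u 0 = b.
Proof.
move=> chi_onto b; have [v chi_v] := chi_onto b.
by exists (cyclic_word v); rewrite ?mem_cyclic_code // ffunE expr0 mul1r.
Qed.

(* If each nonzero x has some x z^c in the prime field and chi vanishes at
   some h != 0, every word vanishes somewhere: the word of v vanishes at c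
   as soon as z^c v is an integer multiple of h. *)
Lemma cyclic_code_root :
  (forall x, x != 0 -> exists c n : nat, x * z ^+ c = n%:R) ->
  forall h, h != 0 -> chi h = 0 ->
  forall u, u \in cyclic_code -> exists i, u i = 0.
Proof.
move=> decomp h h_nz chi_h _ /cyclic_codeP [v ->].
have [-> | v_nz] := eqVneq v 0; first by exists 0; rewrite ffunE mulr0 raddf0.
have [c [n def_n]] := decomp (v / h) (mulf_neq0 v_nz (invr_neq0 h_nz)).
exists (inZp c); rewrite ffunE -[inZp c]add0r exprZp expr0 mul1r.
by rewrite mulrC -(divfK h_nz v) mulrAC def_n mulr_natl raddfMn chi_h mul0rn.
Qed.

End CyclicCode.

Unset Implicit Arguments.

Theorem theorem1p2 (p q k : nat) :
  prime p -> prime q -> odd p -> odd q -> 0 < k ->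
  p = (q ^ k - 1) %/ (q - 1) ->
  exists G : {group {perm 'I_(p * q)}},
    [transitive G, on [set: 'I_(p * q)] | 'P] /\
    imprimitive G /\
    (exists P : {set {set 'I_(p * q)}},
        block_system G P /\ (forall B, B \in P -> #|B| = q)) /\
    intersection_density G = (q%:R)%R.
Proof.
move=> pr_p pr_q _ _ k_gt0 def_p.
have [cardE coprime_pq k_gt1] := repunit_prime_facts pr_p pr_q k_gt0 def_p.
have [F chF cardF] := pPrimePowerField pr_q k_gt0.
have cardF1 : #|F|.-1 = q.-1 * p by rewrite cardF cardE.
have [z z_prim] : exists z : F, (p.-primitive_root z)%R.
  by apply: exists_prim_root; rewrite // cardF1 dvdn_mull.
have [chi [chi_onto [h h_nz chi_h]]] := exists_coordinate_form chF cardF k_gt1.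
have p_gt1 := prime_gt1 pr_p; have card_q : #|'F_q| = q := card_Fp pr_q.
have cardX : #|{: 'Z_p * 'F_q}| = #|'I_(p * q)|.
  by rewrite card_prod card_ord Zp_cast // card_q card_ord.
have U_0 := cyclic_code0 p z chi; have U_sub := @cyclic_codeB p _ _ z chi.
have U_shift := cyclic_code_shift p_gt1 z_prim (chi := chi).
have U_onto := cyclic_code_onto p z chi_onto.
have decomp := unit_decomposition chF z_prim cardF1 coprime_pq.
have U_root := cyclic_code_root p_gt1 z_prim decomp h_nz chi_h.
have [blocks card_blocks] := columns_block_system cardX U_0 U_sub U_shift.
exists (affine_code_group cardX U_0 U_sub U_shift); split; last split; last split.
- exact: affine_code_transitive U_onto.
- exists (columns cardX); split => // S /card_blocks ->.
  by rewrite card_q card_ord prime_gt1 // ltn_Pmull // prime_gt0.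
- by exists (columns cardX); split => // S /card_blocks ->.
- by rewrite (intersection_density_affine_code _ _ _ _ U_root U_onto) card_q.
Qed.
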